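(* Let $X$ be an isotropic $L$-space and let $P\colon X\to X^{\rm c}$ be a convexifying operator. Then $P(\theta)=\theta$. Moreover, if $x\in X^{\rm inv}$, then $P(x)\in X^{\rm inv}$ and $P(x')=(P(x))'$.
   Context: A semilinear space is a set $X$ with an addition and a multiplication by real numbers such that for all $x,y,z\in X$, $\alpha,\beta\in\mathbb R$: $x+y=y+x$; $x+(y+z)=(x+y)+z$; there is $\theta\in X$ with $x+\theta=x$; $\alpha(x+y)=\alpha x+\alpha y$; $\alpha(\beta x)=(\alpha\beta)x$; $1\cdot x=x$, $0\cdot x=\theta$ (the law $(\alpha+\beta)x=\alpha x+\beta x$ is not assumed). An element $x$ is convex if $(\alpha+\beta)x=\alpha x+\beta x$ for all $\alpha,\beta\ge0$; $X^{\rm c}$ denotes the set of convex elements. An element $x$ is invertible if there is $x'\in X$ with $x+x'=\theta$ ($x'$ is then unique and called the inverse of $x$); $X^{\rm inv}$ denotes the set of invertible elements. An $L$-space is a semilinear space $X$ with a metric $h_X$ such that $(X,h_X)$ is complete and separable, and for all $x,y,z\in X$, $\alpha\in\mathbb R$: $h_X(\alpha x,\alpha y)=|\alpha|h_X(x,y)$ and $h_X(x+z,y+z)\le h_X(x,y)$. It is isotropic if the last inequality is always an equality. A convexifying operator is a surjective map $P\colon X\to X^{\rm c}$ such that $h_X(P(x),P(y))\le h_X(x,y)$, $P\circ P=P$, and $P(\alpha x+\beta y)=\alpha P(x)+\beta P(y)$ for all $x,y\in X$, $\alpha,\beta\in\mathbb R$. *)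

From Stdlib Require Import Reals.
Open Scope R_scope.

(** Semilinear space: carrier with addition, real scalar multiplication and
    a zero element theta, satisfying the axioms of the paper (the law
    (a+b)x = ax + bx is NOT assumed). *)
Record SemilinearSpace := {
  carrier :> Type;
  sadd : carrier -> carrier -> carrier;
  smul : R -> carrier -> carrier;
  theta : carrier;
  sadd_comm : forall x y, sadd x y = sadd y x;
  sadd_assoc : forall x y z, sadd x (sadd y z) = sadd (sadd x y) z;
  sadd_theta : forall x, sadd x theta = x;
  smul_sadd : forall a x y, smul a (sadd x y) = sadd (smul a x) (smul a y);
  smul_smul : forall a b x, smul a (smul b x) = smul (a * b) x;
  smul_1 : forall x, smul 1 x = x;
  smul_0 : forall x, smul 0 x = theta
}.

Arguments sadd {s}.
Arguments smul {s}.
Arguments theta {s}.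

Section Defs.
Variable X : SemilinearSpace.

Definition is_convex (x : X) : Prop :=
  forall a b : R, 0 <= a -> 0 <= b -> smul (a + b) x = sadd (smul a x) (smul b x).

Definition is_invertible (x : X) : Prop := exists x' : X, sadd x x' = theta.

Definition is_inverse_of (x x' : X) : Prop := sadd x x' = theta.

Definition is_metric (h : X -> X -> R) : Prop :=
  (forall x y, 0 <= h x y) /\
  (forall x y, h x y = 0 <-> x = y) /\
  (forall x y, h x y = h y x) /\
  (forall x y z, h x z <= h x y + h y z).

Definition cauchy_seq (h : X -> X -> R) (u : nat -> X) : Prop :=
  forall eps, 0 < eps -> exists N, forall m n, (N <= m)%nat -> (N <= n)%nat -> h (u m) (u n) < eps.

Definition converges_to (h : X -> X -> R) (u : nat -> X) (l : X) : Prop :=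
  forall eps, 0 < eps -> exists N, forall n, (N <= n)%nat -> h (u n) l < eps.

Definition complete (h : X -> X -> R) : Prop :=
  forall u, cauchy_seq h u -> exists l, converges_to h u l.

(** separable: a countable dense subset (X is nonempty since theta exists,
    so a dense sequence is equivalent to a countable dense subset) *)
Definition separable (h : X -> X -> R) : Prop :=
  exists d : nat -> X, forall x eps, 0 < eps -> exists n, h x (d n) < eps.

Definition L_space (h : X -> X -> R) : Prop :=
  is_metric h /\ complete h /\ separable h /\
  (forall a x y, h (smul a x) (smul a y) = Rabs a * h x y) /\
  (forall x y z, h (sadd x z) (sadd y z) <= h x y).

Definition isotropic_L_space (h : X -> X -> R) : Prop :=
  L_space h /\ (forall x y z, h (sadd x z) (sadd y z) = h x y).

Definition convexifying_operator (h : X -> X -> R) (P : X -> X) : Prop :=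
  (forall x, is_convex (P x)) /\
  (forall y, is_convex y -> exists x, P x = y) /\
  (forall x y, h (P x) (P y) <= h x y) /\
  (forall x, P (P x) = P x) /\
  (forall x y a b, P (sadd (smul a x) (smul b y)) = sadd (smul a (P x)) (smul b (P y))).

End Defs.

(* Only the linearity of P is needed: taking both coefficients 0 gives
   P(theta) = 0 P(theta) + 0 P(theta) = theta, and taking both coefficients 1
   gives P(x) + P(x') = P(x + x') = P(theta) = theta.  Isotropy of the metric,
   convexity of the values, nonexpansiveness and idempotence play no role. *)
From Stdlib Require Import Reals.

Section LinearMap.

Variable X : SemilinearSpace.
Variable P : X -> X.
Hypothesis P_lincomb : forall x y a b,
  P (sadd (smul a x) (smul b y)) = sadd (smul a (P x)) (smul b (P y)).

Lemma lincomb_theta : P theta = theta.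
Proof.
  pose proof (P_lincomb theta theta 0 0) as E.
  rewrite !smul_0, !sadd_theta in E.
  exact E.
Qed.

Lemma lincomb_sadd x y : P (sadd x y) = sadd (P x) (P y).
Proof.
  pose proof (P_lincomb x y 1 1) as E.
  rewrite !smul_1 in E.
  exact E.
Qed.

Lemma lincomb_inverse x x' :
  is_inverse_of X x x' -> is_inverse_of X (P x) (P x').
Proof.
  unfold is_inverse_of; intros Hx.
  rewrite <- lincomb_sadd, Hx.
  exact lincomb_theta.
Qed.

End LinearMap.

Lemma convexifying_operator_lincomb (X : SemilinearSpace) h P :
  convexifying_operator X h P ->
  forall x y a b,
    P (sadd (smul a x) (smul b y)) = sadd (smul a (P x)) (smul b (P y)).
Proof.
  intros (_ & _ & _ & _ & Hlin).
  exact Hlin.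
Qed.

Theorem lemma2 (X : SemilinearSpace) (h : X -> X -> R) (P : X -> X)
  (HX : isotropic_L_space X h) (HP : convexifying_operator X h P) :
  P theta = theta /\
  (forall x x' : X, is_inverse_of X x x' ->
     is_invertible X (P x) /\ is_inverse_of X (P x) (P x')).
Proof.
  pose proof (convexifying_operator_lincomb X h P HP) as P_lincomb.
  split.
  - exact (lincomb_theta X P P_lincomb).
  - intros x x' Hx.
    pose proof (lincomb_inverse X P P_lincomb x x' Hx) as HPx.
    split.
    + exists (P x'); exact HPx.
    + exact HPx.
Qed.
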